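(* Let $V$ be a finite nonempty set, $c\in\mathbb{R}^{P_V}$, $U,U'\subseteq V$ disjoint, $U''=V\setminus(U\cup U')$, $i\in U$, $j\in U'$, and $\hat x$ a maximally specific partial function on $P_V$. Let $P'_{01}=\{pq\in U\times U'\mid \hat x_{pi}\neq 0\neq \hat x_{jq}\}\setminus\hat x^{-1}(1)$ and $P'_{10}=\big((U''\times U)\cup(U'\times U)\cup(U'\times U'')\big)\setminus\hat x^{-1}(0)$. If $\gamma^{ij|1}(X_V[\hat x])\subseteq X_V[\hat x]$ and $$c_{ij}^+\ \ge\ \sum_{pq\in P'_{01}}c_{pq}^- + \sum_{pq\in P'_{10}}c_{pq}^+,$$ then there is a maximizer $x^*$ of $\varphi_c$ over $X_V[\hat x]$ with $x^*_{ij}=1$.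
   Context: $P_V=\{pq\in V^2\mid p\neq q\}$; $X_V$ is the set of $x\in\{0,1\}^{P_V}$ with $x_{pq}+x_{qr}-x_{pr}\le 1$ for all pairwise distinct $p,q,r\in V$; $\varphi_c(x)=\sum_{pq\in P_V}c_{pq}x_{pq}$. A partial function $\tilde x$ is a map from $\operatorname{dom}(\tilde x)\subseteq P_V$ to $\{0,1\}$, $\tilde x^{-1}(b)$ the pairs mapped to $b$; convention $\tilde x_{aa}=1$ and $x_{aa}=1$ for all $a\in V$, $x\in X_V$. $X_V[\tilde x]=\{x\in X_V\mid x_{pq}=\tilde x_{pq}\ \forall pq\in\operatorname{dom}(\tilde x)\}$. A pair $pq$ is decided if $x_{pq}=x'_{pq}$ for all $x,x'\in X_V[\tilde x]$; $\tilde x$ is maximally specific if $X_V[\tilde x]\ne\emptyset$ and the decided pairs are exactly $\operatorname{dom}(\tilde x)$. For $A,B\subseteq V$ disjoint with $A\cup B=V$, $\sigma_{A\times B}\colon X_V\to X_V$ sets $\sigma_{A\times B}(x)_{pq}=0$ if $pq\in A\times B$ and $=x_{pq}$ otherwise. For $ij\in P_V$, $\sigma_{ij}\colon X_V\to X_V$ sets $\sigma_{ij}(x)_{pq}=1$ if $x_{pi}=x_{jq}=1$ and $=x_{pq}$ otherwise. Let $\gamma=\sigma_{ij}\circ\sigma_{(V\setminus U)\times U}\circ\sigma_{U'\times(V\setminus U')}$ and $\gamma^{ij|1}\colon X_V[\hat x]\to X_V$ with $\gamma^{ij|1}(x)=x$ if $x_{ij}=1$ and $\gamma^{ij|1}(x)=\gamma(x)$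 if $x_{ij}=0$. For real $a$: $a^+=\max(a,0)$, $a^-=\max(-a,0)$. *)

From HB Require Import structures.
From mathcomp Require Import all_boot all_order all_algebra.
Set Implicit Arguments. Unset Strict Implicit. Unset Printing Implicit Defensive.
Import Order.TTheory GRing.Theory Num.Theory.
Local Open Scope ring_scope.

Section Defs.
Variable V : finType.

(* A (total) labeling x in {0,1}^{P_V} is encoded as a finite function on
   V*V whose diagonal is fixed to true (convention x_aa = 1).              *)
Definition in_X (x : {ffun V * V -> bool}) : Prop :=
  (forall a, x (a, a) = true) /\
  (forall p q r, p != q -> q != r -> p != r ->
     (x (p, q) + x (q, r) <= 1 + x (p, r))%N).

(* A partial function: None = undefined. Convention: value on the diagonal is 1. *)
Definition pval (xh : V * V -> option bool) (p q : V) : option bool :=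
  if p == q then Some true else xh (p, q).

Definition in_Xh (xh : V * V -> option bool) (x : {ffun V * V -> bool}) : Prop :=
  in_X x /\ forall p q, p != q -> forall b, xh (p, q) = Some b -> x (p, q) = b.

Definition decided (xh : V * V -> option bool) (p q : V) : Prop :=
  forall x x', in_Xh xh x -> in_Xh xh x' -> x (p, q) = x' (p, q).

Definition maximally_specific (xh : V * V -> option bool) : Prop :=
  (exists x, in_Xh xh x) /\
  (forall p q, (p != q /\ decided xh p q) <-> xh (p, q) <> None).

Definition phi {R : realFieldType} (c : V * V -> R) (x : {ffun V * V -> bool}) : R :=
  \sum_(pq : V * V | pq.1 != pq.2) c pq * (x pq)%:R.

Definition sigma_prod (A B : {set V}) (x : {ffun V * V -> bool}) : {ffun V * V -> bool} :=
  [ffun pq => if pq.1 == pq.2 then true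
              else if (pq.1 \in A) && (pq.2 \in B) then false else x pq].

Definition sigma_pair (i j : V) (x : {ffun V * V -> bool}) : {ffun V * V -> bool} :=
  [ffun pq => if pq.1 == pq.2 then true
              else if ((pq.1 == i) || x (pq.1, i)) && ((j == pq.2) || x (j, pq.2))
                   then true else x pq].

Definition gamma (U U' : {set V}) (i j : V) (x : {ffun V * V -> bool}) :=
  sigma_pair i j (sigma_prod (~: U) U (sigma_prod U' (~: U') x)).

Definition gamma_ij1 (U U' : {set V}) (i j : V) (x : {ffun V * V -> bool}) :=
  if x (i, j) then x else gamma U U' i j x.

Definition pospart {R : realFieldType} (a : R) : R := Num.max a 0.
Definition negpart {R : realFieldType} (a : R) : R := Num.max (- a) 0.

Definition P01 (xh : V * V -> option bool) (U U' : {set V}) (i j : V) (pq : V * V) : bool :=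
  [&& pq.1 \in U, pq.2 \in U', pval xh pq.1 i != Some false,
      pval xh j pq.2 != Some false & xh pq != Some true].

Definition P10 (xh : V * V -> option bool) (U U' : {set V}) (pq : V * V) : bool :=
  let U'' := ~: (U :|: U') in
  [|| (pq.1 \in U'') && (pq.2 \in U),
      (pq.1 \in U') && (pq.2 \in U) | (pq.1 \in U') && (pq.2 \in U'')]
  && (xh pq != Some false).

End Defs.

(* Take a maximizer x of phi_c over X_V[xh].  If x_ij = 0, then gamma(x) also
   lies in X_V[xh] and has gamma(x)_ij = 1.  It differs from x only on pairs
   switched from 0 to 1, which lie in P'_01 (together with ij itself), and on
   pairs switched from 1 to 0, which lie in P'_10.  Hence
   phi_c(gamma x) - phi_c(x) >= c_ij^+ - sum_{P'_01} c^- - sum_{P'_10} c^+ >= 0,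
   so gamma(x) is a maximizer as well. *)
From mathcomp Require Import all_boot all_order all_algebra.
From mathcomp Require Import lra.
From Stdlib Require Import ClassicalEpsilon.
Set Implicit Arguments. Unset Strict Implicit. Unset Printing Implicit Defensive.
Import Order.TTheory GRing.Theory Num.Theory.
Local Open Scope ring_scope.

Section PosNegPart.
Variable R : realFieldType.
Implicit Type a : R.

Lemma pospart_ge0 a : 0 <= pospart a.
Proof. by rewrite /pospart le_max lexx orbT. Qed.

Lemma negpart_ge0 a : 0 <= negpart a.
Proof. by rewrite /negpart le_max lexx orbT. Qed.

Lemma le_pospart a : a <= pospart a.
Proof. by rewrite /pospart le_max lexx. Qed.

Lemma pospart_sub_negpart a : pospart a - negpart a = a.
Proof.
by rewrite /pospart /negpart /Num.max /Order.max /=; do 2 case: ifP; lra.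
Qed.

(* [raise01] and [lower10] flag the pairs of P'_01 and P'_10, [is_ij] the
   pair ij, which must switch from 0 to 1. *)
Lemma switch_gain_ge a (old new raise01 lower10 is_ij : bool) :
    (is_ij ==> new && ~~ old) -> (new && ~~ old ==> raise01) ->
    (old && ~~ new ==> lower10) ->
  is_ij%:R * pospart a - raise01%:R * negpart a - lower10%:R * pospart a
    <= a * (new%:R - old%:R).
Proof.
have := pospart_ge0 a; have := negpart_ge0 a; have := le_pospart a.
have := pospart_sub_negpart a.
by case: is_ij; case: new; case: old; case: raise01; case: lower10 => //=; lra.
Qed.

End PosNegPart.

Lemma sum_indicator_le (R : realFieldType) (T : finType) (A P : pred T)
    (g : T -> R) :
  (forall t, 0 <= g t) -> \sum_(t | A t) (P t)%:R * g t <= \sum_(t | P t) g t.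
Proof.
move=> g_ge0; rewrite [leRHS]big_mkcond [leLHS]big_mkcond /=.
by apply: ler_sum => t _; case: (A t); case: (P t); rewrite /= ?mul1r ?mul0r.
Qed.

Lemma exists_maximizer (R : realFieldType) (T : finType) (P : T -> Prop)
    (f : T -> R) :
  (exists t, P t) -> exists2 m, P m & forall t, P t -> f t <= f m.
Proof.
pose b t : bool := excluded_middle_informative (P t).
have bP t : b t <-> P t by rewrite /b; case: excluded_middle_informative.
case=> t0 /bP Pt0; case: (arg_maxP f Pt0) => m /bP Pm m_max.
by exists m => // t /bP; apply: m_max.
Qed.

Section Labelings.
Variable V : finType.
Implicit Types (x : {ffun V * V -> bool}) (xh : V * V -> option bool).

Lemma sigma_prodE (A B : {set V}) x a b :
  sigma_prod A B x (a, b) = (a == b) || ~~ ((a \in A) && (b \in B)) && x (a, b).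
Proof. by rewrite ffunE /=; case: (a == b); case: (_ && _). Qed.

Lemma sigma_pairE (i j : V) x a b : a != b ->
  sigma_pair i j x (a, b) = ((a == i) || x (a, i)) && ((j == b) || x (j, b)) || x (a, b).
Proof. by move=> ab; rewrite ffunE /= (negbTE ab); case: ifP. Qed.

Lemma phi_subE (R : realFieldType) (c : V * V -> R) x y :
  phi c y - phi c x = \sum_(pq | pq.1 != pq.2) c pq * ((y pq)%:R - (x pq)%:R).
Proof. by rewrite /phi -sumrB; apply: eq_bigr => pq _; rewrite mulrBr. Qed.

Lemma in_Xh_pval xh x p q b : in_Xh xh x -> pval xh p q = Some b -> x (p, q) = b.
Proof.
case=> [[diag _] agree]; rewrite /pval; case: eqVneq => [-> [<-] | pq] //.
exact: agree.
Qed.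

Lemma in_Xh_pval_neq xh x p q : in_Xh xh x -> pval xh p q != Some (~~ x (p, q)).
Proof. by move=> xP; apply/eqP => /(in_Xh_pval xP); case: (x (p, q)). Qed.

Variables (U U' : {set V}) (i j : V).
Hypotheses (UU' : [disjoint U & U']) (iU : i \in U) (jU' : j \in U').

Lemma neq_ij : i != j.
Proof. by apply: contraTneq iU => ->; rewrite (disjointFl UU' jU'). Qed.

Lemma gamma_ij x : gamma U U' i j x (i, j).
Proof. by rewrite /gamma sigma_pairE ?neq_ij // !eqxx. Qed.

Lemma gamma_raised x p q : p != q -> ~~ x (p, q) -> gamma U U' i j x (p, q) ->
  [/\ p \in U, q \in U', (p == i) || x (p, i) & (j == q) || x (j, q)].
Proof.
move=> pq /negbTE xpq; rewrite /gamma sigma_pairE // !sigma_prodE (negbTE pq) xpq !inE.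
rewrite iU jU' (disjointFr UU' iU) (disjointFl UU' jU') !andbF orbF !andbT.
by case: eqVneq => [-> | _]; case: eqVneq => [<- | _]; rewrite ?jU';
  case: (p \in U); case: (p \in U'); case: (q \in U); case: (q \in U');
  case: (x (p, i)); case: (x (j, q)); rewrite /= ?andbF.
Qed.

Lemma gamma_lowered x p q : p != q -> x (p, q) -> ~~ gamma U U' i j x (p, q) ->
  (p \notin U) && (q \in U) || (p \in U') && (q \notin U').
Proof.
move=> pq xpq; rewrite /gamma sigma_pairE // !sigma_prodE (negbTE pq) xpq !inE.
by case: (p \in U); case: (q \in U); case: (p \in U'); case: (q \in U');
  rewrite ?andbF ?orbT.
Qed.

Variable xh : V * V -> option bool.

Lemma gamma_raised_P01 x p q : in_Xh xh x -> p != q -> ~~ x (p, q) ->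
  gamma U U' i j x (p, q) -> P01 xh U U' i j (p, q).
Proof.
move=> xP pq xpq /(gamma_raised pq xpq)[pU qU' pi jq].
have pval_ne_false a b : (a == b) || x (a, b) -> pval xh a b != Some false.
  case/orP=> [/eqP-> | xab]; first by rewrite /pval eqxx.
  by have := in_Xh_pval_neq a b xP; rewrite xab.
have := in_Xh_pval_neq p q xP; rewrite /pval (negbTE pq) (negbTE xpq) /= => xh_pq.
by rewrite /P01 /= pU qU' (pval_ne_false _ _ pi) (pval_ne_false _ _ jq).
Qed.

Lemma gamma_lowered_P10 x p q : in_Xh xh x -> p != q -> x (p, q) ->
  ~~ gamma U U' i j x (p, q) -> P10 xh U U' (p, q).
Proof.
move=> xP pq xpq /(gamma_lowered pq xpq) sides.
have := in_Xh_pval_neq p q xP; rewrite /pval (negbTE pq) xpq /P10 /= => ->.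
rewrite !inE andbT; move: sides.
by case: (p \in U); case: (q \in U); case: (p \in U'); case: (q \in U').
Qed.

Lemma phi_le_gamma (R : realFieldType) (c : V * V -> R) x :
    in_Xh xh x -> ~~ x (i, j) ->
    \sum_(pq | P01 xh U U' i j pq) negpart (c pq)
      + \sum_(pq | P10 xh U U' pq) pospart (c pq) <= pospart (c (i, j)) ->
  phi c x <= phi c (gamma U U' i j x).
Proof.
move=> xP xij budget; rewrite -subr_ge0 phi_subE.
pose gain pq := (pq == (i, j))%:R * pospart (c pq)
  - (P01 xh U U' i j pq)%:R * negpart (c pq) - (P10 xh U U' pq)%:R * pospart (c pq).
apply: le_trans (_ : 0 <= \sum_(pq | pq.1 != pq.2) gain pq) _.
  rewrite !sumrB (bigD1 (i, j)) /= ?neq_ij // eqxx mul1r big1 ?addr0; last first.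
    by move=> pq /andP[_ /negbTE->]; rewrite mul0r.
  have := sum_indicator_le (fun pq : V * V => pq.1 != pq.2) (P01 xh U U' i j)
    (fun pq => negpart_ge0 (c pq)).
  have := sum_indicator_le (fun pq : V * V => pq.1 != pq.2) (P10 xh U U')
    (fun pq => pospart_ge0 (c pq)).
  lra.
apply: ler_sum => -[p q] /= pq; apply: switch_gain_ge.
- by apply/implyP => /eqP[-> ->]; rewrite gamma_ij.
- by apply/implyP => /andP[gx xpq]; apply: gamma_raised_P01 xP pq xpq gx.
- by apply/implyP => /andP[xpq gx]; apply: gamma_lowered_P10 xP pq xpq gx.
Qed.

End Labelings.

Theorem proposition6p6 (R : realFieldType) (V : finType) (hV : (0 < #|V|)%N)
    (c : V * V -> R) (U U' : {set V}) (hUU' : [disjoint U & U'])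
    (i j : V) (hi : i \in U) (hj : j \in U')
    (xh : V * V -> option bool) (hxh : maximally_specific xh)
    (hgamma : forall x, in_Xh xh x -> in_Xh xh (gamma_ij1 U U' i j x))
    (hc : \sum_(pq : V * V | P01 xh U U' i j pq) negpart (c pq)
          + \sum_(pq : V * V | P10 xh U U' pq) pospart (c pq)
          <= pospart (c (i, j))) :
  exists xs : {ffun V * V -> bool},
    [/\ in_Xh xh xs,
        (forall x, in_Xh xh x -> phi c x <= phi c xs) &
        xs (i, j) = true].
Proof.
have [xm xmP xm_max] := exists_maximizer (phi c) hxh.1.
case xm_ij: (xm (i, j)); first by exists xm.
have gammaP : in_Xh xh (gamma U U' i j xm).
  by have := hgamma _ xmP; rewrite /gamma_ij1 xm_ij.
exists (gamma U U' i j xm); split => //; last exact: gamma_ij.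
move=> x xP; apply: le_trans (xm_max x xP) _.
by apply: (phi_le_gamma hUU' hi hj xmP _ hc); rewrite xm_ij.
Qed.
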